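(* Fix an integer $k\ge 2$. Then \[ \lim_{r\to\infty}\gamma^{B}_{k,r}=\gamma^{B}_{k}\qquad\text{and}\qquad \lim_{r\to\infty}\gamma_{k,r}=\gamma_{k}, \] where the quantities are as defined in the context (in particular, both limits over $r$ exist).
   Context: Let $\Sigma=\{0,1,\dots,k-1\}$. For strings $u=u_1\cdots u_n$, $v=v_1\cdots v_n\in\Sigma^n$, let $\mathbf{L}(u,v)$ be the length of a longest common subsequence of $u$ and $v$, i.e. the largest $m$ such that there are indices $1\le i_1<\dots<i_m\le n$ and $1\le j_1<\dots<j_m\le n$ with $u_{i_a}=v_{j_a}$ for all $a$. For an integer $r\ge 1$, let $\mathbf{L}_r(u,v)$ be the largest such $m$ subject to the additional requirement $|i_a-j_a|\le r$ for all $a$. Let $\mathbf{EL}^{(k)}_n=k^{-2n}\sum_{u,v\in\Sigma^n}\mathbf{L}(u,v)$ and $\mathbf{EL}_{n,k,r}=k^{-2n}\sum_{u,v\in\Sigma^n}\mathbf{L}_r(u,v)$. Bernoulli Matching model: let $(\epsilon_{ij})_{i,j\ge1}$ be independent random variables with $\Pr(\epsilon_{ij}=1)=1/k$, $\Pr(\epsilon_{ij}=0)=1-1/k$. Let $\mathbf{D}_{n}$ be the largest $m$ such that there are $1\le i_1<\dots<i_m\le n$, $1\le j_1<\dots<j_m\le n$ with $\epsilon_{i_aj_a}=1$ for all $a$, and let $\mathbf{R}_{n,r}$ be the largest such $m$ with the additional requirement $|i_a-j_a|\le r$ for all $a$. Let $\mathbf{EL}^{B(k)}_n=\mathbb{E}\,\mathbf{D}_n$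 and $\mathbf{EL}^{B}_{n,k,r}=\mathbb{E}\,\mathbf{R}_{n,r}$. All four sequences are superadditive in $n$, so the limits $\gamma_k=\lim_n \mathbf{EL}^{(k)}_n/n$, $\gamma_{k,r}=\lim_n\mathbf{EL}_{n,k,r}/n$, $\gamma^B_k=\lim_n\mathbf{EL}^{B(k)}_n/n$, $\gamma^B_{k,r}=\lim_n\mathbf{EL}^B_{n,k,r}/n$ exist. *)

From HB Require Import structures.
From mathcomp Require Import all_boot all_order all_algebra.
From mathcomp Require Import all_classical all_reals all_analysis.
Set Implicit Arguments. Unset Strict Implicit. Unset Printing Implicit Defensive.
Import Order.TTheory GRing.Theory Num.Theory.
Import numFieldNormedType.Exports.
Local Open Scope ring_scope.

(* Listing a chain
   in increasing order gives exactly index sequences i_1<..<i_m, j_1<..<j_m. *)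
Definition chainb (n : nat) (s : {set 'I_n * 'I_n}) : bool :=
  [forall p in s, forall q in s,
     [|| p == q, ((p.1 < q.1)%N && (p.2 < q.2)%N) | ((q.1 < p.1)%N && (q.2 < p.2)%N)]].

Definition LCSgen (n : nat) (M : 'I_n -> 'I_n -> bool) (ok : nat -> nat -> bool) : nat :=
  \max_(s : {set 'I_n * 'I_n} | chainb s && [forall p in s, M p.1 p.2 && ok p.1 p.2]) #|s|.

Definition band (r : nat) (i j : nat) : bool := ((i <= j + r) && (j <= i + r))%N.

Definition LCS (k n : nat) (u v : {ffun 'I_n -> 'I_k}) : nat :=
  LCSgen (fun i j => u i == v j) (fun _ _ => true).
Definition LCSr (k n r : nat) (u v : {ffun 'I_n -> 'I_k}) : nat :=
  LCSgen (fun i j => u i == v j) (band r).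

(* Bernoulli matching: eps restricted to [1,n]x[1,n] *)
Definition Dn (n : nat) (eps : {ffun 'I_n * 'I_n -> bool}) : nat :=
  LCSgen (fun i j => eps (i, j)) (fun _ _ => true).
Definition Rnr (n r : nat) (eps : {ffun 'I_n * 'I_n -> bool}) : nat :=
  LCSgen (fun i j => eps (i, j)) (band r).

Section Expect.
Variable R : realType.

Definition EL (k n : nat) : R :=
  ((k ^ (2 * n))%:R)^-1 * \sum_(u : {ffun 'I_n -> 'I_k}) \sum_(v : {ffun 'I_n -> 'I_k}) (LCS u v)%:R.
Definition ELr (k n r : nat) : R :=
  ((k ^ (2 * n))%:R)^-1 * \sum_(u : {ffun 'I_n -> 'I_k}) \sum_(v : {ffun 'I_n -> 'I_k}) (LCSr r u v)%:R.

Definition bprob (k n : nat) (eps : {ffun 'I_n * 'I_n -> bool}) : R :=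
  \prod_(p : 'I_n * 'I_n) (if eps p then (k%:R)^-1 else 1 - (k%:R)^-1).

Definition ELB (k n : nat) : R :=
  \sum_(eps : {ffun 'I_n * 'I_n -> bool}) bprob k eps * (Dn eps)%:R.
Definition ELBr (k n r : nat) : R :=
  \sum_(eps : {ffun 'I_n * 'I_n -> bool}) bprob k eps * (Rnr r eps)%:R.

Definition gamma (k : nat) : R := limn (fun n => EL k n / n%:R).
Definition gamma_r (k r : nat) : R := limn (fun n => ELr k n r / n%:R).
Definition gammaB (k : nat) : R := limn (fun n => ELB k n / n%:R).
Definition gammaB_r (k r : nat) : R := limn (fun n => ELBr k n r / n%:R).
End Expect.

(* For a fixed admissibility condition on matched index pairs, the expected
   length of a longest common subsequence is superadditive in n: optimal chains
   for the first m and the last n positions concatenate into a chain for m + n,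
   and under the product measure the two blocks have the laws of the length-m
   and length-n models.  Being also bounded by n, both the banded and the
   unrestricted expectations grow at a rate equal to the supremum of their
   normalised values (Fekete).  The banded rate is at most the unrestricted
   one, and for n <= r the band |i - j| <= r is no constraint at all, so every
   normalised value EL_n / n with n <= r lies below the banded rate; letting
   r grow squeezes the banded rate to the unrestricted one. *)

From HB Require Import structures.
From mathcomp Require Import all_boot all_order all_algebra.
From mathcomp Require Import all_classical all_reals all_analysis.
From mathcomp Require Import lra.
Import Order.TTheory GRing.Theory Num.Theory.
Import numFieldNormedType.Exports.
Set Implicit Arguments. Unset Strict Implicit. Unset Printing Implicit Defensive.

Section Chains.
Variable n : nat.
Implicit Types (s : {set 'I_n * 'I_n}) (M : 'I_n -> 'I_n -> bool) (ok : nat -> nat -> bool).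

Lemma chainbP s :
  reflect {in s &, forall p q : 'I_n * 'I_n,
             [|| p == q, (p.1 < q.1) && (p.2 < q.2) | (q.1 < p.1) && (q.2 < p.2)]}
          (chainb s).
Proof.
apply: (iffP forall_inP) => [chain_s p q ps qs | chain_s p ps].
  exact: (forall_inP (chain_s p ps)).
by apply/forall_inP => q; apply: chain_s.
Qed.

Lemma LCSgen_witness M ok :
  exists2 s, chainb s && [forall p in s, M p.1 p.2 && ok p.1 p.2] & LCSgen M ok = #|s|.
Proof.
pose P s := chainb s && [forall p in s, M p.1 p.2 && ok p.1 p.2].
have P0 : P finset.set0.
  by apply/andP; split; [apply/chainbP | apply/forall_inP] => p; rewrite inE.
exists [arg max_(s > finset.set0 | P s) #|s|]; first by case: arg_maxnP.
exact: bigop.bigmax_eq_arg.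
Qed.

Lemma LCSgen_le_n M ok : LCSgen M ok <= n.
Proof.
apply/bigmax_leqP => s /andP[/chainbP chain_s _].
have inj_fst : {in s &, injective (fun p : 'I_n * 'I_n => p.1)}.
  move=> p q ps qs p1q1; case/or3P: (chain_s p q ps qs) => [/eqP // | | ];
  by rewrite p1q1 ltnn.
by rewrite -(card_in_imset inj_fst); apply: leq_trans (max_card _) _; rewrite card_ord.
Qed.

Lemma leq_LCSgen M ok ok' :
  (forall i j, ok i j -> ok' i j) -> LCSgen M ok <= LCSgen M ok'.
Proof.
move=> ok_ok'; apply/bigmax_leqP => s /andP[chain_s /forall_inP Ms].
apply: leq_bigmax_cond; rewrite chain_s; apply/forall_inP => p /Ms /andP[-> /ok_ok' //].
Qed.

Lemma eq_LCSgen M M' ok ok' :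
  (forall i j, M i j = M' i j) -> (forall i j : 'I_n, ok i j = ok' i j) ->
  LCSgen M ok = LCSgen M' ok'.
Proof.
move=> eqM eqok; apply: eq_bigl => s; congr (_ && _).
by apply: eq_forallb => p; rewrite eqM eqok.
Qed.

End Chains.

Definition lshift_pair m n (p : 'I_m * 'I_m) : 'I_(m + n) * 'I_(m + n) :=
  (lshift n p.1, lshift n p.2).
Definition rshift_pair m n (p : 'I_n * 'I_n) : 'I_(m + n) * 'I_(m + n) :=
  (rshift m p.1, rshift m p.2).
Arguments lshift_pair {m} n p.
Arguments rshift_pair m {n} p.

Lemma lshift_pair_inj m n : injective (@lshift_pair m n).
Proof. by move=> [a b] [c d] [/val_inj -> /val_inj ->]. Qed.

Lemma rshift_pair_inj m n : injective (@rshift_pair m n).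
Proof. by move=> [a b] [c d] [/addnI/val_inj -> /addnI/val_inj ->]. Qed.

Lemma chainb_cat m n (s1 : {set 'I_m * 'I_m}) (s2 : {set 'I_n * 'I_n}) :
  chainb s1 -> chainb s2 -> chainb (lshift_pair n @: s1 :|: rshift_pair m @: s2).
Proof.
move=> /chainbP chain1 /chainbP chain2; apply/chainbP => p q.
rewrite !inE => /orP[|] /imsetP[x xs ->] /orP[|] /imsetP[y ys ->] /=.
- by case/or3P: (chain1 x y xs ys) => [/eqP -> | -> | ->]; rewrite ?eqxx ?orbT.
- by rewrite !ltn_addr ?orbT.
- by rewrite !ltn_addr ?orbT.
- by case/or3P: (chain2 x y xs ys) => [/eqP -> | | ]; rewrite ?eqxx // !ltn_add2l => ->;
  rewrite ?orbT.
Qed.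

Lemma LCSgen_superadditive m n (M : 'I_(m + n) -> 'I_(m + n) -> bool) ok :
  (forall i j, ok (m + i) (m + j) = ok i j) ->
  LCSgen (fun i j => M (lshift n i) (lshift n j)) ok +
  LCSgen (fun i j => M (rshift m i) (rshift m j)) ok <= LCSgen M ok.
Proof.
move=> ok_shift.
have [s1 /andP[chain1 /forall_inP M1] ->] :=
  LCSgen_witness (fun i j => M (lshift n i) (lshift n j)) ok.
have [s2 /andP[chain2 /forall_inP M2] ->] :=
  LCSgen_witness (fun i j => M (rshift m i) (rshift m j)) ok.
set s := lshift_pair n @: s1 :|: rshift_pair m @: s2.
have disj : [disjoint lshift_pair n @: s1 & rshift_pair m @: s2].
  rewrite disjoint_subset; apply/fintype.subsetP => _ /imsetP[x _ ->]; rewrite !inE.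
  apply/imsetP => -[y _ [x1_eq _]].
  by move: (ltn_ord x.1); rewrite x1_eq ltnNge leq_addr.
have card_s : #|s1| + #|s2| = #|s|.
  rewrite -(card_imset _ (@lshift_pair_inj m n)) -(card_imset _ (@rshift_pair_inj m n)).
  by apply/eqP; rewrite eq_sym (leq_card_setU _ _).2.
rewrite card_s /LCSgen; apply: leq_bigmax_cond.
rewrite chainb_cat //=; apply/forall_inP => p; rewrite inE.
by case/orP => /imsetP[x xs ->] /=; [apply: M1 | rewrite ok_shift; apply: M2].
Qed.

Local Open Scope classical_set_scope.
Local Open Scope ring_scope.

Section ProductWeights.
Variables (R : numDomainType) (T : finType) (w : T -> R).
Hypothesis w_sum1 : \sum_t w t = 1.

Definition pexpect (I : finType) (f : {ffun I -> T} -> R) : R :=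
  \sum_(e : {ffun I -> T}) (\prod_i w (e i)) * f e.

Lemma pexpect_cst (I : finType) c : pexpect (fun _ : {ffun I -> T} => c) = c.
Proof. by rewrite /pexpect -mulr_suml -(bigA_distr_bigA (fun=> w)) big1 ?mul1r. Qed.

Lemma pexpectD (I : finType) (f g : {ffun I -> T} -> R) :
  pexpect (fun e => f e + g e) = pexpect f + pexpect g.
Proof. by rewrite /pexpect -big_split; apply: eq_bigr => e _; rewrite mulrDr. Qed.

Lemma pexpect_restrict_eq (I J : finType) (g : J -> I) (e' : {ffun J -> T}) :
  injective g -> pexpect (fun e => ([ffun j => e (g j)] == e')%:R) = \prod_j w (e' j).
Proof.
(* With pre a partial inverse of g, the integrand factors coordinatewise, and the
   coordinates outside the range of g integrate to 1. *)
move=> g_inj; pose pre i := [pick j | g j == i].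
have pre_g j : pre (g j) = Some j.
  by rewrite /pre; case: pickP => [j' /eqP/g_inj -> | /(_ j)]; rewrite ?eqxx.
have pre_Some i j : pre i = Some j -> g j = i.
  by rewrite /pre; case: pickP => // j' /eqP <- [<-].
have pre_None i : pre i = None -> forall j, (g j == i) = false.
  by rewrite /pre; case: pickP.
pose G i t := w t * (if pre i is Some j then (t == e' j)%:R else 1).
have factor (e : {ffun I -> T}) :
    (\prod_i w (e i)) * ([ffun j => e (g j)] == e')%:R = \prod_i G i (e i).
  rewrite /G big_split /=; congr (_ * _); have [<- | neq] := eqVneq.
    rewrite big1 // => i _; case pre_i: (pre i) => [j|] //.
    by rewrite -(pre_Some _ _ pre_i) ffunE eqxx.
  have [j /negbTE e_neq] : exists j, e (g j) != e' j.
    apply/existsP; apply: contraR neq => /existsPn eq_e.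
    by apply/eqP/ffunP => j; rewrite ffunE; apply/eqP/negPn.
  by rewrite (bigD1 (g j)) //= pre_g e_neq mul0r.
rewrite /pexpect (eq_bigr _ (fun e _ => factor e)) -bigA_distr_bigA /=.
have sum_G i : \sum_t G i t = if pre i is Some j then w (e' j) else 1.
  rewrite /G; case: (pre i) => [j|]; last by under eq_bigr do rewrite mulr1.
  rewrite (bigD1 (e' j)) //= eqxx mulr1 big1 ?addr0 // => t /negbTE ->.
  by rewrite mulr0.
rewrite (eq_bigr _ (fun i _ => sum_G i)) (partition_big g xpredT) //=.
apply: eq_bigr => i _; case pre_i: (pre i) => [j|].
  rewrite (big_pred1 j) // => j' /=; rewrite -(pre_Some _ _ pre_i).
  by apply/eqP/eqP => [/g_inj | ->].
by rewrite big_pred0 // => j'; rewrite pre_None.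
Qed.

Lemma pexpect_restrict (I J : finType) (g : J -> I) (f : {ffun J -> T} -> R) :
  injective g -> pexpect (fun e => f [ffun j => e (g j)]) = pexpect f.
Proof.
move=> g_inj.
transitivity (pexpect (fun e => \sum_e' ([ffun j => e (g j)] == e')%:R * f e')).
  congr pexpect; apply/funext => e; rewrite (bigD1 [ffun j => e (g j)]) //= eqxx mul1r.
  by rewrite big1 ?addr0 // => e' /negbTE; rewrite eq_sym => ->; rewrite mul0r.
rewrite {1}/pexpect; under eq_bigr do rewrite mulr_sumr; rewrite exchange_big /=.
apply: eq_bigr => e' _; rewrite -(pexpect_restrict_eq e' g_inj) /pexpect mulr_suml.
by apply: eq_bigr => e _; rewrite mulrA.
Qed.

Lemma pexpect_restrict2 (I J : finType) (g : J -> I)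
    (f : {ffun J -> T} -> {ffun J -> T} -> R) :
  injective g ->
  pexpect (fun e => pexpect (fun e' => f [ffun j => e (g j)] [ffun j => e' (g j)])) =
  pexpect (fun e => pexpect (fun e' => f e e')).
Proof.
move=> g_inj; rewrite -(pexpect_restrict (fun e => pexpect (f e)) g_inj).
by congr pexpect; apply/funext => e; apply: pexpect_restrict.
Qed.

Hypothesis w_ge0 : forall t, 0 <= w t.

Lemma pexpect_ge0 (I : finType) (f : {ffun I -> T} -> R) :
  (forall e, 0 <= f e) -> 0 <= pexpect f.
Proof. by move=> f_ge0; apply: sumr_ge0 => e _; rewrite mulr_ge0 ?prodr_ge0. Qed.

Lemma ler_pexpect (I : finType) (f g : {ffun I -> T} -> R) :
  (forall e, f e <= g e) -> pexpect f <= pexpect g.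
Proof.
move=> le_fg; apply: ler_sum => e _; apply: ler_wpM2l (le_fg e).
exact: prodr_ge0.
Qed.

Lemma pexpect_le_cst (I : finType) (f : {ffun I -> T} -> R) c :
  (forall e, f e <= c) -> pexpect f <= c.
Proof. by move=> f_le; rewrite -[leRHS](pexpect_cst I); apply: ler_pexpect. Qed.

End ProductWeights.

Definition unif_weight (R : numFieldType) (k : nat) (_ : 'I_k) : R := k%:R^-1.
Arguments unif_weight : clear implicits.
Definition bern_weight (R : numFieldType) (k : nat) (b : bool) : R :=
  if b then k%:R^-1 else 1 - k%:R^-1.

Definition ELgen (R : numFieldType) (k : nat) (ok : nat -> nat -> bool) (n : nat) : R :=
  pexpect (unif_weight R k) (fun u : {ffun 'I_n -> 'I_k} =>
    pexpect (unif_weight R k) (fun v => (LCSgen (fun i j => u i == v j) ok)%:R)).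

Definition ELBgen (R : numFieldType) (k : nat) (ok : nat -> nat -> bool) (n : nat) : R :=
  pexpect (bern_weight R k) (fun eps : {ffun 'I_n * 'I_n -> bool} =>
    (LCSgen (fun i j => eps (i, j)) ok)%:R).

Section Models.
Variables (R : numFieldType) (k : nat).
Hypothesis k_gt0 : (0 < k)%N.
Implicit Types ok : nat -> nat -> bool.

Lemma unif_weight_ge0 t : 0 <= unif_weight R k t.
Proof. by rewrite invr_ge0. Qed.

Lemma sum_unif_weight : \sum_t unif_weight R k t = 1.
Proof. by rewrite sumr_const card_ord -[_ *+ k]mulr_natr mulVf // pnatr_eq0 -lt0n. Qed.

Lemma bern_weight_ge0 b : 0 <= bern_weight R k b.
Proof. by case: b; rewrite ?invr_ge0 // subr_ge0 invf_le1 ?ltr0n ?ler1n. Qed.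

Lemma sum_bern_weight : \sum_b bern_weight R k b = 1.
Proof. by rewrite big_bool /= addrC subrK. Qed.

Lemma ELgenE ok n : ELgen R k ok n = (k ^ (2 * n))%:R^-1 *
  \sum_(u : {ffun 'I_n -> 'I_k}) \sum_(v : {ffun 'I_n -> 'I_k})
    (LCSgen (fun i j => u i == v j) ok)%:R.
Proof.
rewrite mulr_sumr; apply: eq_bigr => u _; rewrite mulr_sumr mulr_sumr.
apply: eq_bigr => v _; rewrite mulrA; congr (_ * _).
by rewrite !prodr_const card_ord mul2n -addnn expnD natrM invfM natrX exprVn.
Qed.

Lemma ELgen_ge0 ok n : 0 <= ELgen R k ok n.
Proof. by do 2!apply: (pexpect_ge0 unif_weight_ge0) => ?. Qed.

Lemma ELgen_le_n ok n : ELgen R k ok n <= n%:R.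
Proof.
do 2!apply: (pexpect_le_cst sum_unif_weight unif_weight_ge0) => ?.
by rewrite ler_nat LCSgen_le_n.
Qed.

Lemma ELgen_mono ok ok' n :
  (forall i j, ok i j -> ok' i j) -> ELgen R k ok n <= ELgen R k ok' n.
Proof.
move=> ok_ok'; do 2!apply: (ler_pexpect unif_weight_ge0) => ?.
by rewrite ler_nat leq_LCSgen.
Qed.

Lemma ELgen_local ok ok' n :
  (forall i j : 'I_n, ok i j = ok' i j) -> ELgen R k ok n = ELgen R k ok' n.
Proof.
move=> eq_ok; congr pexpect; apply/funext => u; congr pexpect; apply/funext => v.
by rewrite (eq_LCSgen (fun _ _ => erefl) eq_ok).
Qed.

Lemma ELgen_superadditive ok m n : (forall i j, ok (m + i)%N (m + j)%N = ok i j) ->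
  ELgen R k ok m + ELgen R k ok n <= ELgen R k ok (m + n).
Proof.
move=> ok_shift; rewrite /ELgen.
rewrite -(pexpect_restrict2 sum_unif_weight _ (@lshift_inj m n)).
rewrite -(pexpect_restrict2 sum_unif_weight _ (@rshift_inj m n)) -pexpectD.
apply: (ler_pexpect unif_weight_ge0) => u; rewrite -pexpectD.
apply: (ler_pexpect unif_weight_ge0) => v; rewrite -natrD ler_nat.
apply: leq_trans (LCSgen_superadditive (fun i j => u i == v j) ok_shift).
by rewrite leq_add // eq_leq //; apply: eq_LCSgen => // i j; rewrite !ffunE.
Qed.

Lemma ELBgen_ge0 ok n : 0 <= ELBgen R k ok n.
Proof. exact: (pexpect_ge0 bern_weight_ge0). Qed.

Lemma ELBgen_le_n ok n : ELBgen R k ok n <= n%:R.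
Proof.
by apply: (pexpect_le_cst sum_bern_weight bern_weight_ge0) => ?; rewrite ler_nat LCSgen_le_n.
Qed.

Lemma ELBgen_mono ok ok' n :
  (forall i j, ok i j -> ok' i j) -> ELBgen R k ok n <= ELBgen R k ok' n.
Proof.
by move=> ok_ok'; apply: (ler_pexpect bern_weight_ge0) => ?; rewrite ler_nat leq_LCSgen.
Qed.

Lemma ELBgen_local ok ok' n :
  (forall i j : 'I_n, ok i j = ok' i j) -> ELBgen R k ok n = ELBgen R k ok' n.
Proof.
move=> eq_ok; congr pexpect; apply/funext => eps.
by rewrite (eq_LCSgen (fun _ _ => erefl) eq_ok).
Qed.

Lemma ELBgen_superadditive ok m n : (forall i j, ok (m + i)%N (m + j)%N = ok i j) ->
  ELBgen R k ok m + ELBgen R k ok n <= ELBgen R k ok (m + n).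
Proof.
move=> ok_shift; rewrite /ELBgen.
rewrite -(pexpect_restrict sum_bern_weight _ (@lshift_pair_inj m n)).
rewrite -(pexpect_restrict sum_bern_weight _ (@rshift_pair_inj m n)) -pexpectD.
apply: (ler_pexpect bern_weight_ge0) => eps; rewrite -natrD ler_nat.
apply: leq_trans (LCSgen_superadditive (fun i j => eps (i, j)) ok_shift).
by rewrite leq_add // eq_leq //; apply: eq_LCSgen => // i j; rewrite ffunE.
Qed.

End Models.

Lemma EL_ELgen (R : realType) k n : EL R k n = ELgen R k (fun _ _ => true) n.
Proof. by rewrite ELgenE. Qed.

Lemma ELr_ELgen (R : realType) k n r : ELr R k n r = ELgen R k (band r) n.
Proof. by rewrite ELgenE. Qed.

Definition rate (R : numFieldType) (a : nat -> R) (n : nat) : R := a n / n%:R.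

Section Fekete.
Variables (R : realType) (a : nat -> R).
Hypothesis a_ge0 : forall n, 0 <= a n.
Hypothesis a_le : forall n, a n <= n%:R.
Hypothesis a_super : forall m n, a m + a n <= a (m + n)%N.

Lemma superadditive_mulrn q m : a m *+ q <= a (q * m)%N.
Proof.
elim: q => [|q IHq]; first by rewrite mulr0n mul0n a_ge0.
by rewrite mulrSr mulSnr; apply: le_trans (a_super _ _); rewrite lerD2r.
Qed.

Lemma rate_ge0 n : 0 <= rate a n.
Proof. by rewrite divr_ge0. Qed.

Lemma rate_le1 n : rate a n <= 1.
Proof. by case: n => [|n]; rewrite /rate ?invr0 ?mulr0 // ler_pdivrMr ?mul1r. Qed.

Lemma superadditive_rate_lb m n :
  (0 < m)%N -> (0 < n)%N -> rate a m - m%:R / n%:R <= rate a n.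
Proof.
(* Writing n = q m + r with r < m, superadditivity gives a n >= q a m, and q m >= n - m. *)
move=> m_gt0 n_gt0.
have m_neq0 : m%:R != 0 :> R by rewrite pnatr_eq0 -lt0n.
have n_gt0R : 0 < n%:R :> R by rewrite ltr0n.
have an : a n = n%:R * rate a n by rewrite /rate mulrC divfK // gt_eqF.
have multiple : (n %/ m * m)%:R * rate a m <= a n.
  rewrite /rate natrM mulrAC -mulrA divfK // mulr_natl.
  apply: le_trans (superadditive_mulrn _ _) _.
  by rewrite {2}(divn_eq n m) -[leLHS]addr0 (le_trans _ (a_super _ _)) ?lerD2l.
have quotient : n%:R - m%:R <= (n %/ m * m)%:R :> R.
  rewrite lerBlDr -natrD ler_nat {1}(divn_eq n m) leq_add2l ltnW //.
  exact: ltn_pmod.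
have lower : (n%:R - m%:R) * rate a m <= n%:R * rate a n.
  by rewrite -an; apply: le_trans multiple; rewrite ler_wpM2r ?rate_ge0.
have rate_m : m%:R * rate a m <= m%:R by rewrite ler_piMr ?rate_le1.
rewrite lerBlDr -lerBlDl ler_pdivlMr //.
lra.
Qed.

Lemma has_sup_rate : has_sup (range (rate a)).
Proof. by split; [exists (rate a 0), 0%N | exists 1 => _ [n _ <-]; apply: rate_le1]. Qed.

Lemma rate_le_sup n : rate a n <= sup (range (rate a)).
Proof. by apply: sup_upper_bound; [exact: has_sup_rate | exists n]. Qed.

Lemma superadditive_rate_cvg : rate a @ \oo --> sup (range (rate a)).
Proof.
apply/cvgrPdist_lt => e e_gt0; have e2_gt0 : 0 < e / 2 by rewrite divr_gt0.
have [m m_gt0 close_m] : exists2 m, (0 < m)%N & sup (range (rate a)) - e / 2 < rate a m.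
  have [_ [[|m] _ <-] close_m] := sup_adherent e2_gt0 has_sup_rate.
    by exists 1%N => //; apply: lt_le_trans close_m _; rewrite /rate invr0 mulr0 rate_ge0.
  by exists m.+1.
near=> n.
have n_gt0 : (0 < n)%N by near: n; exact: nbhs_infty_gt.
have small : m%:R / n%:R < e / 2.
  rewrite ltr_pdivrMr ?ltr0n // mulrC -ltr_pdivrMr //.
  by near: n; exact: nbhs_infty_gtr.
have := superadditive_rate_lb m_gt0 n_gt0.
rewrite ger0_norm ?subr_ge0 ?rate_le_sup //; lra.
Unshelve. all: end_near.
Qed.

Lemma lim_superadditive_rate : limn (rate a) = sup (range (rate a)).
Proof. exact/cvg_lim/superadditive_rate_cvg. Qed.

End Fekete.

Lemma band_shift r m i j : band r (m + i) (m + j) = band r i j.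
Proof. by rewrite /band -!addnA !leq_add2l. Qed.

Lemma band_small r n (i j : 'I_n) : (n <= r)%N -> band r i j.
Proof.
move=> n_le_r; rewrite /band.
by rewrite !(leq_trans (ltnW (leq_trans (ltn_ord _) n_le_r)) (leq_addl _ _)).
Qed.

Section BandedRates.
Variables (R : realType) (E : (nat -> nat -> bool) -> nat -> R).
Hypothesis E_ge0 : forall ok n, 0 <= E ok n.
Hypothesis E_le : forall ok n, E ok n <= n%:R.
Hypothesis E_mono : forall (ok ok' : nat -> nat -> bool) n,
  (forall i j, ok i j -> ok' i j) -> E ok n <= E ok' n.
Hypothesis E_local : forall (ok ok' : nat -> nat -> bool) n,
  (forall i j : 'I_n, ok i j = ok' i j) -> E ok n = E ok' n.
Hypothesis E_super : forall ok m n,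
  (forall i j, ok (m + i)%N (m + j)%N = ok i j) -> E ok m + E ok n <= E ok (m + n)%N.

Lemma lim_rate_sup ok : (forall m i j, ok (m + i)%N (m + j)%N = ok i j) ->
  limn (rate (E ok)) = sup (range (rate (E ok))).
Proof. by move=> ok_shift; apply: lim_superadditive_rate => // m n; apply: E_super. Qed.

Lemma cvg_band_rates :
  (fun r => limn (rate (E (band r)))) @ \oo --> limn (rate (E (fun _ _ => true))).
Proof.
have sup_rate ok := has_sup_rate (E_le ok).
rewrite lim_rate_sup //; apply/cvgrPdist_lt => e e_gt0.
have [_ [m _ <-] close_m] := sup_adherent e_gt0 (sup_rate (fun _ _ => true)).
near=> r; rewrite lim_rate_sup => [|? ? ?]; last exact: band_shift.
have band_le_full :
    sup (range (rate (E (band r)))) <= sup (range (rate (E (fun _ _ => true)))).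
  apply: ge_sup; first by exists (rate (E (band r)) 0%N), 0%N.
  move=> _ [n _ <-]; apply: le_trans (rate_le_sup (E_le _) n).
  by rewrite ler_wpM2r ?invr_ge0 ?E_mono.
have m_in_band : rate (E (fun _ _ => true)) m <= sup (range (rate (E (band r)))).
  rewrite /rate (@E_local _ (band r)) => [|i j]; first exact: rate_le_sup.
  by rewrite band_small //; near: r; exact: nbhs_infty_ge.
rewrite ger0_norm ?subr_ge0 //; lra.
Unshelve. all: end_near.
Qed.

End BandedRates.

Theorem mainTheorem1 (R : realType) (k : nat) (hk : (2 <= k)%N) :
  ((fun r : nat => gammaB_r R k r) @ \oo --> gammaB R k) /\
  ((fun r : nat => gamma_r R k r) @ \oo --> gamma R k).
Proof.
have k_gt0 : (0 < k)%N by apply: leq_trans hk.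
split.
  exact: (cvg_band_rates (ELBgen_ge0 R k_gt0) (ELBgen_le_n R k_gt0) (ELBgen_mono R k_gt0)
            (@ELBgen_local R k) (ELBgen_superadditive R k_gt0)).
have EL_rate : (fun n => EL R k n / n%:R) = rate (ELgen R k (fun _ _ => true)).
  by apply/funext => n; rewrite /rate EL_ELgen.
have ELr_rate r : (fun n => ELr R k n r / n%:R) = rate (ELgen R k (band r)).
  by apply/funext => n; rewrite /rate ELr_ELgen.
rewrite /gamma /gamma_r EL_rate; under eq_fun do rewrite ELr_rate.
exact: (cvg_band_rates (ELgen_ge0 R k) (ELgen_le_n R k_gt0) (@ELgen_mono R k)
          (@ELgen_local R k) (ELgen_superadditive R k_gt0)).
Qed.
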